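(* The Sierpinski affine system $\mathsf{S}$ is a Sierpinski object in $\mathbf{Sys}(L)$: for every affine system $(X,\kappa,A)$, the source of all morphisms $(X,\kappa,A)\to\mathsf{S}$ is initial, i.e. for every affine system $(\tilde X,\tilde\kappa,\tilde A)$, every map $g:\tilde X\to X$ and every homomorphism $\psi:A\to\tilde A$ such that $(f\circ g,\psi\circ\varphi)$ is a morphism $(\tilde X,\tilde\kappa,\tilde A)\to\mathsf{S}$ for every morphism $(f,\varphi):(X,\kappa,A)\to\mathsf{S}$, the pair $(g,\psi)$ is a morphism $(\tilde X,\tilde\kappa,\tilde A)\to(X,\kappa,A)$.
   Context: Fix a variety $\mathbf{A}$ of algebras (full subcategory of the category of $\Omega$-algebras and homomorphisms closed under products, subalgebras and homomorphic images) having a free algebra $S$ over a singleton $\{*\}$ with universal map $\eta:\{*\}\to|S|$; for an algebra $A$ and $a\in A$, $\overline{a}^A:S\to A$ is the unique homomorphism with $\eta( * )\mapsto a$. Fix an $\mathbf{A}$-algebra $L$; $L^X$ is the power algebra. An affine system is $(X,\kappa,A)$ with $X$ a set, $A$ an algebra, $\kappa:A\to L^X$ a homomorphism; a morphism $(f,\varphi):(X_1,\kappa_1,A_1)\to(X_2,\kappa_2,A_2)$ is a map $f:X_1\to X_2$ with a homomorphism $\varphi:A_2\to A_1$ such that $\kappa_1(\varphi(a))(x)=\kappa_2(a)(f(x))$ for all $a\in A_2,x\in X_1$; composition $(g,\psi)\circ(f,\varphi)=(g\circ f,\varphi\circ\psi)$. This category is $\mathbf{Sys}(L)$. The Sierpinski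 affine system is $\mathsf{S}=(|L|,\kappa_S,S)$ where $\kappa_S:S\to L^{|L|}$ is the unique homomorphism with $\kappa_S(s)(b)=\overline{b}^L(s)$ (equivalently $\kappa_S(\eta( * ))=\mathrm{id}_L$). *)

Record algebra (Op : Type) (ar : Op -> Type) := Alg {
  carrier :> Type;
  op : forall o : Op, (ar o -> carrier) -> carrier }.
Arguments Alg {Op ar}.

Arguments carrier {Op ar}.
Arguments op {Op ar}.

Definition is_hom {Op ar} (A B : algebra Op ar) (h : A -> B) : Prop :=
  forall (o : Op) (args : ar o -> A), h (op A o args) = op B o (fun i => h (args i)).

Definition prod_alg {Op ar} (I : Type) (F : I -> algebra Op ar) : algebra Op ar :=
  Alg (forall i, F i) (fun o args i => op (F i) o (fun j => args j i)).

Definition power_alg {Op ar} (L : algebra Op ar) (X : Type) : algebra Op ar :=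
  prod_alg X (fun _ : X => L).

(* a variety: class of algebras closed under products, (isomorphic copies of)
   subalgebras and homomorphic images *)
Definition is_variety {Op ar} (V : algebra Op ar -> Prop) : Prop :=
  (forall (I : Type) (F : I -> algebra Op ar), (forall i, V (F i)) -> V (prod_alg I F)) /\
  (forall (A B : algebra Op ar) (h : B -> A), is_hom B A h ->
     (forall x y, h x = h y -> x = y) -> V A -> V B) /\
  (forall (A B : algebra Op ar) (h : A -> B), is_hom A B h ->
     (forall y, exists x, h x = y) -> V A -> V B).

(* S (with eta( * ) = e) is the free algebra of V over a singleton *)
Definition is_free_on_one {Op ar} (V : algebra Op ar -> Prop)
  (S : algebra Op ar) (e : S) : Prop :=
  V S /\
  forall (B : algebra Op ar), V B -> forall b : B,
    (exists h : S -> B, is_hom S B h /\ h e = b) /\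
    (forall h h' : S -> B, is_hom S B h -> h e = b -> is_hom S B h' -> h' e = b ->
       forall s, h s = h' s).

Definition is_affsys {Op ar} (V : algebra Op ar -> Prop) (L : algebra Op ar)
  (X : Type) (A : algebra Op ar) (kappa : A -> X -> L) : Prop :=
  V A /\ is_hom A (power_alg L X) kappa.

Definition is_sys_mor {Op ar} (L : algebra Op ar)
  (X1 : Type) (A1 : algebra Op ar) (k1 : A1 -> X1 -> L)
  (X2 : Type) (A2 : algebra Op ar) (k2 : A2 -> X2 -> L)
  (f : X1 -> X2) (phi : A2 -> A1) : Prop :=
  is_hom A2 A1 phi /\ forall (a : A2) (x : X1), k1 (phi a) x = k2 a (f x).

(* kappa_S for the Sierpinski system (|L|, kappa_S, S), where
   bar b = \overline{b}^L : S -> L *)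
Definition kappaS {Op ar} (L S : algebra Op ar) (bar : L -> S -> L) : S -> L -> L :=
  fun s b => bar b s.


(* For [a] in [A], let [phi_a : S -> A] be the homomorphism sending the
   generator to [a]. Freeness of [S] makes [(kappa a, phi_a)] a morphism into
   the Sierpinski system, and evaluating any morphism into it at the generator
   recovers its map component. Applying the hypothesis to [(kappa a, phi_a)]
   and evaluating at the generator gives [kappat (psi a) x = kappa a (g x)]. *)

Section SierpinskiObject.

Context {Op : Type} {ar : Op -> Type}.

Lemma is_hom_comp (A B C : algebra Op ar) (h : A -> B) (k : B -> C) :
  is_hom A B h -> is_hom B C k -> is_hom A C (fun a => k (h a)).
Proof.
  intros Hh Hk o args.
  rewrite Hh, Hk.
  reflexivity.
Qed.

Lemma is_hom_eval (A L : algebra Op ar) (X : Type) (kappa : A -> X -> L) (x : X) :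
  is_hom A (power_alg L X) kappa -> is_hom A L (fun a => kappa a x).
Proof.
  intros Hkappa o args.
  rewrite Hkappa.
  reflexivity.
Qed.

Context {V : algebra Op ar -> Prop} {S : algebra Op ar} {e : S}
  (HS : is_free_on_one V S e).
Context {L : algebra Op ar} {bar : L -> S -> L}
  (Hbar : forall b : L, is_hom S L (bar b) /\ bar b e = b).

Lemma free_hom_ext (B : algebra Op ar) (h h' : S -> B) :
  V B -> is_hom S B h -> is_hom S B h' -> h e = h' e -> forall s, h s = h' s.
Proof.
  intros HB Hh Hh' Heq.
  destruct HS as [_ Huniv].
  destruct (Huniv B HB (h' e)) as [_ Huniq].
  exact (Huniq h h' Hh Heq Hh' eq_refl).
Qed.

Lemma sys_mor_to_sierpinski_at_gen (X : Type) (A : algebra Op ar)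
    (kappa : A -> X -> L) (f : X -> L) (phi : S -> A) :
  is_sys_mor L X A kappa L S (kappaS L S bar) f phi ->
  forall x, kappa (phi e) x = f x.
Proof.
  intros [_ Hmor] x.
  rewrite (Hmor e x).
  apply Hbar.
Qed.

Context (HL : V L).

Lemma sys_mor_to_sierpinski_of_elem (X : Type) (A : algebra Op ar)
    (kappa : A -> X -> L) (phi : S -> A) (a : A) :
  is_hom A (power_alg L X) kappa -> is_hom S A phi -> phi e = a ->
  is_sys_mor L X A kappa L S (kappaS L S bar) (kappa a) phi.
Proof.
  intros Hkappa Hphi Hphie.
  split; [exact Hphi |].
  intros s x.
  unfold kappaS.
  apply (free_hom_ext L (fun s => kappa (phi s) x) (bar (kappa a x)) HL).
  - exact (is_hom_comp _ _ _ _ _ Hphi (is_hom_eval _ _ _ _ x Hkappa)).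
  - apply Hbar.
  - rewrite Hphie. symmetry. apply Hbar.
Qed.

End SierpinskiObject.

Theorem proposition3 (Op : Type) (ar : Op -> Type)
  (V : algebra Op ar -> Prop) (HV : is_variety V)
  (S : algebra Op ar) (e : S) (HS : is_free_on_one V S e)
  (L : algebra Op ar) (HL : V L)
  (bar : L -> S -> L) (Hbar : forall b : L, is_hom S L (bar b) /\ bar b e = b)
  (X : Type) (A : algebra Op ar) (kappa : A -> X -> L)
  (Hsys : is_affsys V L X A kappa)
  (Xt : Type) (At : algebra Op ar) (kappat : At -> Xt -> L)
  (Hsyst : is_affsys V L Xt At kappat)
  (g : Xt -> X) (psi : A -> At) (Hpsi : is_hom A At psi)
  (Hsrc : forall (f : X -> L) (phi : S -> A),
      is_sys_mor L X A kappa L S (kappaS L S bar) f phi ->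
      is_sys_mor L Xt At kappat L S (kappaS L S bar)
        (fun x => f (g x)) (fun s => psi (phi s))) :
  is_sys_mor L Xt At kappat X A kappa g psi.
Proof.
  destruct Hsys as [HVA Hkappa].
  split; [exact Hpsi |].
  intros a x.
  destruct (proj2 HS A HVA a) as [[phi [Hphi Hphie]] _].
  pose proof (sys_mor_to_sierpinski_of_elem HS Hbar HL _ _ _ _ _
                Hkappa Hphi Hphie) as Hmor.
  pose proof (sys_mor_to_sierpinski_at_gen Hbar _ _ _ _ _ (Hsrc _ _ Hmor) x)
    as Hgen.
  cbv beta in Hgen.
  rewrite Hphie in Hgen.
  exact Hgen.
Qed.
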